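(* Let $(\mathcal{H}, p_0, \mathcal{Z}, T, \mathcal{Y}, O)$ be a learning POMDP, let $h^* \in \mathcal{H}$ be a target hypothesis, let $0<\lambda\le 1$ be a teaching performance and let $t^*\in\mathbb{N}_{\ge 1}$ be a pre-set number of trials. Suppose there exist a polynomial $B\in\mathcal{R}[t,b]$ of degree $d$, a sum-of-squares polynomial $p^f\in\Sigma[b]$, and constants $s_1,s_2>0$ such that (i) $B(t^*,b)+p^f(b)\big(b(h^* )-\lambda\big)-s_1\in\Sigma[b]$; (ii) $-B(0,p_0)-s_2>0$; (iii) for all $t\in\{1,\dots,t^*\}$, $y\in\mathcal{Y}$, $z\in\mathcal{Z}$: $$-R_z(b,y)^d\Big(B\Big(t,\tfrac{S_z(b,y)}{R_z(b,y)}\Big)-B(t-1,b)\Big)\in\Sigma[t,b].$$ Then there exists no solution of the belief dynamics $b_t=f_{z}(b_{t-1},y_t)$ (with arbitrary examples $z\in\mathcal{Z}$ and observations $y_t\in\mathcal{Y}$) with $b_0=p_0$ and $b_{t^*}\in\mathcal{B}_f$, where $\mathcal{B}_f=\{b\in\mathcal{B}: b(h^* )<\lambda\}$; hence the teaching performance is satisfied, i.e. $b_{t^*}(h^* )\ge\lambda$ along all such trajectories.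
   Context: A learning POMDP is a tuple $(\mathcal{H}, p_0, \mathcal{Z}, T, \mathcal{Y}, O)$ where $\mathcal{H}$ is a finite set of hypotheses, $\mathcal{Z}$ a finite set of examples (actions), $\mathcal{Y}$ a finite set of observations, $p_0$ an initial distribution on $\mathcal{H}$, $T(h,z,h')\in[0,1]$ transition probabilities and $O(y\mid h',z)\in[0,1]$ observation probabilities. $\mathcal{B}$ is the unit simplex of beliefs on $\mathcal{H}$; $b=(b(h))_{h\in\mathcal{H}}$ are treated as real variables. The belief update $f_z(b,y)$ is the rational map with components $f_z^{h'}(b,y)=S_z^{h'}(b,y)/R_z(b,y)$, where $S_z^{h'}(b,y)=O(y\mid h',z)\sum_{h\in\mathcal{H}}T(h,z,h')b(h)$ and $R_z(b,y)=\sum_{h''\in\mathcal{H}}O(y\mid h'',z)\sum_{h\in\mathcal{H}}T(h,z,h'')b(h)$; $S_z/R_z$ denotes the vector with these components. $\mathcal{R}[x]$ denotes real polynomials in the variables $x$, and $\Sigma[x]\subset\mathcal{R}[x]$ the polynomials that are sums of squares of polynomials. *)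

From HB Require Import structures.
From mathcomp Require Import all_boot all_order all_algebra.
From mathcomp Require Import mpoly.
Set Implicit Arguments. Unset Strict Implicit. Unset Printing Implicit Defensive.
Import Order.TTheory GRing.Theory Num.Theory.
Local Open Scope ring_scope.

(* Polynomials in b live in {mpoly R[n]} (variable 'X_h stands for b(h));
   polynomials in (t,b) live in {mpoly R[n.+1]}, variable ord0 is t and
   variable (lift ord0 h) is b(h). *)

Section LearningPOMDP.
Variables (R : realFieldType) (n : nat) (Z Y : finType).

Definition is_sos k (p : {mpoly R[k]}) : Prop :=
  exists qs : seq {mpoly R[k]}, p = \sum_(q <- qs) q ^+ 2.

Definition in_simplex (b : 'I_n -> R) : Prop :=
  (forall h, 0 <= b h) /\ \sum_(h < n) b h = 1.

Variables (T : 'I_n -> Z -> 'I_n -> R) (O : Y -> 'I_n -> Z -> R).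

Definition Spoly (z : Z) (y : Y) (h' : 'I_n) : {mpoly R[n]} :=
  (O y h' z)%:MP * \sum_(h < n) (T h z h')%:MP * 'X_h.
Definition Rpoly (z : Z) (y : Y) : {mpoly R[n]} :=
  \sum_(h'' < n) Spoly z y h''.

Definition Sval (z : Z) (y : Y) (b : 'I_n -> R) (h' : 'I_n) : R :=
  O y h' z * \sum_(h < n) T h z h' * b h.
Definition Rval (z : Z) (y : Y) (b : 'I_n -> R) : R :=
  \sum_(h'' < n) Sval z y b h''.
Definition belief_update (z : Z) (b : 'I_n -> R) (y : Y) : 'I_n -> R :=
  fun h' => Sval z y b h' / Rval z y b.

Definition subst_t_var (c : R) (i : 'I_n.+1) : {mpoly R[n]} :=
  match unlift ord0 i with Some j => 'X_j | None => c%:MP end.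
Definition subst_t (c : R) (B : {mpoly R[n.+1]}) : {mpoly R[n]} :=
  B \mPo [tuple subst_t_var c i | i < n.+1].

Definition eval_tb (B : {mpoly R[n.+1]}) (c : R) (v : 'I_n -> R) : R :=
  B.@[fun i : 'I_n.+1 => match unlift ord0 i with Some j => v j | None => c end].

(* R_z(b,y)^d * B(c, S_z(b,y)/R_z(b,y)), written as the polynomial obtained
   by clearing denominators monomial by monomial (valid when d >= deg B) *)
Definition cleared_comp (d : nat) (B : {mpoly R[n.+1]}) (c : R) (z : Z) (y : Y)
  : {mpoly R[n]} :=
  \sum_(m <- msupp B)
     (B@_m * c ^+ (m ord0))%:MP
     * (\prod_(h < n) Spoly z y h ^+ (m (lift ord0 h)))
     * Rpoly z y ^+ (d - \sum_(h < n) m (lift ord0 h))%N.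

End LearningPOMDP.

From HB Require Import structures.
From mathcomp Require Import all_boot all_order all_algebra.
From mathcomp Require Import mpoly.
From mathcomp Require Import zify ring lra.
Set Implicit Arguments. Unset Strict Implicit. Unset Printing Implicit Defensive.
Import Order.TTheory GRing.Theory Num.Theory.
Local Open Scope ring_scope.

(* [B] is a barrier function: evaluated along a trajectory, [B(t, b_t)] never
   increases, because by (iii) the difference [B(t, b_t) - B(t-1, b_(t-1))]
   times the positive factor [R^d] is minus a sum of squares.  Hence
   [B(tstar, b_tstar) <= B(0, p0) < 0], whereas (i) forces
   [B(tstar, b) >= s1 > 0] at every belief with [b(hstar) < lambda]. *)

Lemma meval_sos_ge0 (R : realFieldType) k (p : {mpoly R[k]}) v :
  is_sos p -> 0 <= p.@[v].
Proof.
move=> [qs ->]; rewrite rmorph_sum sumr_ge0 // => q _.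
by rewrite rmorphXn sqr_ge0.
Qed.

Section LearningPOMDP.
Variables (R : realFieldType) (n : nat) (Z Y : finType).

Lemma meval_subst_t (c : R) (B : {mpoly R[n.+1]}) (v : 'I_n -> R) :
  (subst_t c B).@[v] = eval_tb B c v.
Proof.
rewrite /subst_t comp_mpoly_meval /eval_tb; apply: meval_eq => i.
rewrite tnth_mktuple /subst_t_var; case: unlift => [j|].
- exact: mevalXU.
- exact: mevalC.
Qed.

Lemma eval_tb_ge_of_certificate (B : {mpoly R[n.+1]}) (pf : {mpoly R[n]})
    (c lambda s1 : R) (hstar : 'I_n) (v : 'I_n -> R) :
  is_sos pf -> is_sos (subst_t c B + pf * ('X_hstar - lambda%:MP) - s1%:MP) ->
  v hstar <= lambda -> s1 <= eval_tb B c v.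
Proof.
move=> pf_sos /(meval_sos_ge0 v) cert_ge0 v_le.
have pf_ge0 := meval_sos_ge0 v pf_sos.
have pf_term_le0 : pf.@[v] * (v hstar - lambda) <= 0.
  by rewrite mulr_ge0_le0 // subr_le0.
move: cert_ge0; rewrite mevalB mevalD mevalM mevalB mevalXU !mevalC.
rewrite meval_subst_t; lra.
Qed.

Variables (T : 'I_n -> Z -> 'I_n -> R) (O : Y -> 'I_n -> Z -> R).

Lemma meval_Spoly z y h v : (Spoly T O z y h).@[v] = Sval T O z y v h.
Proof.
rewrite /Spoly /Sval mevalM mevalC rmorph_sum /=; congr (_ * _).
by apply: eq_bigr => i _; rewrite mevalM mevalC mevalXU.
Qed.

Lemma meval_Rpoly z y v : (Rpoly T O z y).@[v] = Rval T O z y v.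
Proof. by rewrite rmorph_sum; apply: eq_bigr => h _; apply: meval_Spoly. Qed.

(* The exponent [d - |m|] in [cleared_comp] is a truncated subtraction; it is
   exact since every monomial [m] of [B] has degree at most [d = deg B]. *)
Lemma meval_cleared_comp d (B : {mpoly R[n.+1]}) c z y v :
  (msize B).-1 = d -> Rval T O z y v != 0 ->
  (cleared_comp T O d B c z y).@[v]
  = Rval T O z y v ^+ d * eval_tb B c (belief_update T O z v y).
Proof.
move=> dB Rv_neq0.
rewrite /cleared_comp /eval_tb [in RHS]mevalE rmorph_sum mulr_sumr /=.
apply: eq_big_seq => m m_supp.
rewrite !mevalM rmorphXn rmorph_prod /= mevalC meval_Rpoly big_ord_recl unlift_none.
under eq_bigr => h _ do rewrite rmorphXn /= meval_Spoly.
under [in RHS]eq_bigr => h _ do rewrite liftK /belief_update expr_div_n.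
rewrite prodf_div prodrXr.
set K := (\sum_(h < n) m (lift ord0 h))%N.
have K_le_d : (K <= d)%N.
  by move: (msize_mdeg_lt m_supp); rewrite mdegE big_ord_recl -dB -/K; lia.
have RK_neq0 : Rval T O z y v ^+ K != 0 by rewrite expf_neq0.
rewrite -{2}(subnK K_le_d) exprD.
by field.
Qed.

Lemma eval_tb_belief_update_le d (B : {mpoly R[n.+1]}) c c' z y v :
  (msize B).-1 = d -> 0 < Rval T O z y v ->
  is_sos (- (cleared_comp T O d B c z y - Rpoly T O z y ^+ d * subst_t c' B)) ->
  eval_tb B c (belief_update T O z v y) <= eval_tb B c' v.
Proof.
move=> dB Rv_gt0 /(meval_sos_ge0 v).
rewrite mevalN mevalB mevalM rmorphXn /= meval_Rpoly meval_subst_t.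
rewrite meval_cleared_comp ?gt_eqF // oppr_ge0 -mulrBr.
by rewrite pmulr_rle0 ?exprn_gt0 // subr_le0.
Qed.

Lemma belief_update_Rval_eq0 z v y :
  Rval T O z y v = 0 -> belief_update T O z v y =1 (fun=> 0).
Proof. by move=> Rv0 h; rewrite /belief_update Rv0 invr0 mulr0. Qed.

Lemma Rval_eq0 z y v : v =1 (fun=> 0) -> Rval T O z y v = 0.
Proof.
move=> v0; rewrite /Rval big1 // => h _.
by rewrite /Sval big1 ?mulr0 // => i _; rewrite v0 mulr0.
Qed.

Hypotheses (T_ge0 : forall h z h', 0 <= T h z h')
           (O_ge0 : forall y h' z, 0 <= O y h' z).

Lemma Sval_ge0 z y v h : (forall i, 0 <= v i) -> 0 <= Sval T O z y v h.
Proof.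
by move=> v_ge0; rewrite mulr_ge0 // sumr_ge0 // => i _; rewrite mulr_ge0.
Qed.

Lemma Rval_ge0 z y v : (forall i, 0 <= v i) -> 0 <= Rval T O z y v.
Proof. by move=> v_ge0; rewrite sumr_ge0 // => h _; apply: Sval_ge0. Qed.

Lemma belief_update_ge0 z v y h :
  (forall i, 0 <= v i) -> 0 <= belief_update T O z v y h.
Proof. by move=> v_ge0; rewrite divr_ge0 ?Sval_ge0 ?Rval_ge0. Qed.

Section Trajectory.
Variables (d tstar : nat) (B : {mpoly R[n.+1]}).
Variables (zs : nat -> Z) (ys : nat -> Y) (b : nat -> 'I_n -> R).
Hypotheses (dB : (msize B).-1 = d) (b0_ge0 : forall h, 0 <= b 0%N h).
Hypothesis B_decrease : forall (t : nat) (y : Y) (z : Z), (1 <= t <= tstar)%N ->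
  is_sos (- (cleared_comp T O d B t%:R z y - Rpoly T O z y ^+ d * subst_t t.-1%:R B)).
Hypothesis b_step : forall t, (1 <= t <= tstar)%N ->
  b t = belief_update T O (zs t) (b t.-1) (ys t).

(* The junk value [x / 0 = 0] makes the update collapse to the zero vector
   when [R_z(b, y) = 0]; the zero vector is absorbing. *)
Lemma barrier_nonincreasing t : (t <= tstar)%N ->
  (forall h, 0 <= b t h) /\
  (b t =1 (fun=> 0) \/ eval_tb B t%:R (b t) <= eval_tb B 0%:R (b 0%N)).
Proof.
elim: t => [_|t IH lt_t]; first by split=> //; right.
have [bt_ge0 bt_cases] := IH (ltnW lt_t).
have step_t : (1 <= t.+1 <= tstar)%N by rewrite lt_t.
rewrite (b_step step_t) /=; split=> [h|]; first exact: belief_update_ge0.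
have [Rt0|Rt_neq0] := eqVneq (Rval T O (zs t.+1) (ys t.+1) (b t)) 0.
  by left; apply: belief_update_Rval_eq0.
have Rt_gt0 : 0 < Rval T O (zs t.+1) (ys t.+1) (b t).
  by rewrite lt_def Rt_neq0 Rval_ge0.
case: bt_cases => [bt0|Bt_le].
  by move: Rt_neq0; rewrite Rval_eq0 ?eqxx.
right; apply: le_trans Bt_le.
exact: eval_tb_belief_update_le dB Rt_gt0 (B_decrease _ _ step_t).
Qed.

End Trajectory.
End LearningPOMDP.

Theorem corollary1 (R : realFieldType) (n : nat) (Z Y : finType)
  (p0 : 'I_n -> R) (T : 'I_n -> Z -> 'I_n -> R) (O : Y -> 'I_n -> Z -> R)
  (hstar : 'I_n) (lambda : R) (tstar : nat)
  (B : {mpoly R[n.+1]}) (d : nat) (pf : {mpoly R[n]}) (s1 s2 : R) :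
  in_simplex p0 ->
  (forall h z h', 0 <= T h z h' <= 1) ->
  (forall y h' z, 0 <= O y h' z <= 1) ->
  0 < lambda <= 1 ->
  (1 <= tstar)%N ->
  (msize B).-1 = d ->
  is_sos pf ->
  0 < s1 -> 0 < s2 ->
  is_sos (subst_t tstar%:R B + pf * ('X_hstar - lambda%:MP) - s1%:MP) ->
  - eval_tb B 0 p0 - s2 > 0 ->
  (forall (t : nat) (y : Y) (z : Z), (1 <= t <= tstar)%N ->
     is_sos (- (cleared_comp T O d B t%:R z y
                - Rpoly T O z y ^+ d * subst_t t.-1%:R B))) ->
  forall (zs : nat -> Z) (ys : nat -> Y) (b : nat -> 'I_n -> R),
    b 0%N = p0 ->
    (forall t, (1 <= t <= tstar)%N -> b t = belief_update T O (zs t) (b t.-1) (ys t)) ->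
    ~ (in_simplex (b tstar) /\ b tstar hstar < lambda).
Proof.
move=> p0_simplex T_01 O_01 _ _ dB pf_sos s1_gt0 s2_gt0 cert B0_lt B_decrease
  zs ys b b0 b_step [[_ bt_sum] bt_lt].
have T_ge0 h z h' : 0 <= T h z h' by case/andP: (T_01 h z h').
have O_ge0 y h' z : 0 <= O y h' z by case/andP: (O_01 y h' z).
have b0_ge0 : forall h, 0 <= b 0%N h by rewrite b0; case: p0_simplex.
have [_ [bt0|Bt_le]] :=
  barrier_nonincreasing T_ge0 O_ge0 dB b0_ge0 B_decrease b_step (leqnn tstar).
  by move: bt_sum; rewrite big1 // => /eqP; rewrite eq_sym oner_eq0.
have := eval_tb_ge_of_certificate pf_sos cert (ltW bt_lt).
by move: Bt_le; rewrite b0 mulr0n; lra.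
Qed.
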